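(* Let $\tau_0\in(0,1)$, $\bar\beta>0$, and define $\tau_{k+1}:=\frac{\tau_k}{2}\big[\sqrt{\tau_k^2+4}-\tau_k\big]$ for $k\ge0$. Let $\beta_1^0=\beta_2^0:=\bar\beta$ and for $k\ge0$ set $\beta_1^{k+1}:=(1-\tau_k)\beta_1^k$, $\beta_2^{k+1}:=\beta_2^k$ if $k$ is even, and $\beta_1^{k+1}:=\beta_1^k$, $\beta_2^{k+1}:=(1-\tau_k)\beta_2^k$ if $k$ is odd. Then for all $k\ge1$, $$\frac{(1-\tau_0)\bar\beta}{2\tau_0k+1}<\beta_1^k<\frac{2\bar\beta\sqrt{1-\tau_0}}{\tau_0k},\qquad \frac{\bar\beta\sqrt{1-\tau_0}}{2\tau_0k+1}<\beta_2^k<\frac{2\bar\beta}{\tau_0k}.$$ *)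

From Stdlib Require Import Reals Lra.
Open Scope R_scope.

Fixpoint tau (tau0 : R) (k : nat) : R :=
  match k with
  | O => tau0
  | S k' => let t := tau tau0 k' in t / 2 * (sqrt (t ^ 2 + 4) - t)
  end.

Fixpoint beta (tau0 betabar : R) (k : nat) : R * R :=
  match k with
  | O => (betabar, betabar)
  | S k' =>
      let b := beta tau0 betabar k' in
      let t := tau tau0 k' in
      if Nat.even k' then ((1 - t) * fst b, snd b)
      else (fst b, (1 - t) * snd b)
  end.

Definition beta1 tau0 betabar k := fst (beta tau0 betabar k).
Definition beta2 tau0 betabar k := snd (beta tau0 betabar k).

(** The step [t |-> t' = t/2 (sqrt (t^2+4) - t)] is the positive root of
    [t'^2 = (1 - t') t^2].  This identity gives [1/t' - 1/t = t/(t + t')], a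
    number in [(1/2, 1)], so [1/tau_k] lies between [1/tau_0 + k/2] and
    [1/tau_0 + k].  It also telescopes: since every step multiplies one of the
    two betas by [1 - tau_k], the product [beta_1^(k+1) beta_2^(k+1)] equals
    [(1 - tau_0) (betabar tau_k / tau_0)^2].  Because the factors [1 - tau_k]
    increase and are applied alternately, [(1 - tau_0) beta_2^k <= beta_1^k <=
    beta_2^k] for [k >= 1], and a product together with a ratio bound pins
    down both factors. *)

From Stdlib Require Import Reals Lra Lia.
Open Scope R_scope.

Definition tau_next (t : R) : R := t / 2 * (sqrt (t ^ 2 + 4) - t).

Lemma tau_S t0 k : tau t0 (S k) = tau_next (tau t0 k).
Proof. reflexivity. Qed.

Lemma tau_next_bounds t : 0 < t -> 0 < tau_next t < t.
Proof.
  intros Ht; unfold tau_next.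
  assert (Hs2 : sqrt (t ^ 2 + 4) * sqrt (t ^ 2 + 4) = t ^ 2 + 4)
    by (apply sqrt_sqrt; nra).
  pose proof (sqrt_pos (t ^ 2 + 4)).
  assert (t < sqrt (t ^ 2 + 4) < t + 2) by nra.
  split; [apply Rmult_lt_0_compat|]; nra.
Qed.

Lemma tau_next_sq t : tau_next t ^ 2 = (1 - tau_next t) * t ^ 2.
Proof.
  unfold tau_next.
  assert (Hs2 : sqrt (t ^ 2 + 4) * sqrt (t ^ 2 + 4) = t ^ 2 + 4)
    by (apply sqrt_sqrt; nra).
  set (s := sqrt (t ^ 2 + 4)) in *.
  replace ((t / 2 * (s - t)) ^ 2) with (t ^ 2 * (s * s - 2 * s * t + t * t) / 4)
    by field.
  rewrite Hs2; field.
Qed.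

Lemma inv_tau_next_bounds t : 0 < t ->
  / t + / 2 <= / tau_next t <= / t + 1.
Proof.
  intros Ht.
  destruct (tau_next_bounds t Ht) as [Ht'0 Ht't].
  pose proof (tau_next_sq t) as Hsq.
  set (t' := tau_next t) in *.
  (* [t^2 - t'^2 = t' t^2] rewrites [1/t' - 1/t] as [t / (t + t')]. *)
  assert (Hdiff : / t' = / t + t / (t + t')).
  { apply Rmult_eq_reg_r with (t * t' * (t + t')); [|nra].
    field_simplify; [nra | lra..]. }
  assert (t / (t + t') <= 1)
    by (apply Rmult_le_reg_r with (t + t'); [lra|]; field_simplify; lra).
  assert (/ 2 <= t / (t + t'))
    by (apply Rmult_le_reg_r with (2 * (t + t')); [lra|]; field_simplify; lra).
  lra.
Qed.

Lemma Rlt_div_of_mul_lt a b c : 0 < c -> a * c < b -> a < b / c.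
Proof.
  intros Hc H; apply Rmult_lt_reg_r with c; [exact Hc|].
  unfold Rdiv; rewrite Rmult_assoc, Rinv_l; lra.
Qed.

Lemma Rdiv_lt_of_lt_mul a b c : 0 < c -> a < b * c -> a / c < b.
Proof.
  intros Hc H; apply Rmult_lt_reg_r with c; [exact Hc|].
  unfold Rdiv; rewrite Rmult_assoc, Rinv_l; lra.
Qed.

Lemma sandwich_of_prod_ratio s m x y : 0 < s -> 0 < m -> 0 < y ->
  s ^ 2 * y <= x <= y -> x * y = s ^ 2 * m ^ 2 ->
  s ^ 2 * m <= x <= s * m /\ s * m <= y <= m.
Proof.
  intros Hs Hm Hy [Hlo Hhi] Hxy.
  assert (Ha : 0 < s ^ 2) by (apply pow_lt; lra).
  assert (Hx : 0 < x) by nra.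
  assert (Hsm : 0 < s * m) by nra.
  repeat split; apply Rsqr_incr_0_var; unfold Rsqr; try lra.
  - assert (s ^ 2 * (x * y) <= x * x) by nra. nra.
  - nra.
  - nra.
  - assert (s ^ 2 * (y * y) <= s ^ 2 * (m * m)) by nra. nra.
Qed.

Section Tau.

Variable t0 : R.
Hypothesis ht0 : 0 < t0 < 1.

Lemma tau_pos k : 0 < tau t0 k.
Proof.
  induction k as [|k IH]; [simpl; lra|].
  rewrite tau_S; apply tau_next_bounds, IH.
Qed.

Lemma tau_decr k : tau t0 (S k) < tau t0 k.
Proof. rewrite tau_S; apply tau_next_bounds, tau_pos. Qed.

Lemma tau_lt_1 k : tau t0 k < 1.
Proof.
  induction k as [|k IH]; [simpl; lra|].
  pose proof (tau_decr k); lra.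
Qed.

Lemma tau_S_sq k : tau t0 (S k) ^ 2 = (1 - tau t0 (S k)) * tau t0 k ^ 2.
Proof. rewrite tau_S; apply tau_next_sq. Qed.

Lemma inv_tau_bounds k : / t0 + INR k / 2 <= / tau t0 k <= / t0 + INR k.
Proof.
  induction k as [|k IH]; [simpl; lra|].
  rewrite S_INR, tau_S.
  pose proof (inv_tau_next_bounds _ (tau_pos k)); lra.
Qed.

Lemma tau_div_t0_bounds k :
  1 < tau t0 k / t0 * (2 * t0 * INR (S k) + 1) /\
  tau t0 k / t0 * (t0 * INR (S k)) < 2.
Proof.
  destruct (inv_tau_bounds k) as [Hlo Hhi].
  pose proof (tau_pos k). pose proof (pos_INR k).
  rewrite S_INR.
  set (t := tau t0 k) in *.
  assert (Ht0 : 0 < t * t0) by nra.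
  assert (Hlo' : t0 <= t * (1 + t0 * INR k)).
  { apply Rmult_le_compat_l with (r := t * t0) in Hhi; [|lra].
    replace (t * t0 * / t) with t0 in Hhi by (field; lra).
    replace (t * t0 * (/ t0 + INR k)) with (t * (1 + t0 * INR k)) in Hhi
      by (field; lra).
    exact Hhi. }
  assert (Hhi' : t * (2 + t0 * INR k) <= 2 * t0).
  { apply Rmult_le_compat_l with (r := 2 * t * t0) in Hlo; [|lra].
    replace (2 * t * t0 * / t) with (2 * t0) in Hlo by (field; lra).
    replace (2 * t * t0 * (/ t0 + INR k / 2)) with (t * (2 + t0 * INR k)) in Hlo
      by (field; lra).
    exact Hlo. }
  split.
  - rewrite <- Rmult_div_swap; apply Rlt_div_of_mul_lt; [lra|]; nra.
  - replace (t / t0 * (t0 * (INR k + 1))) with (t * (INR k + 1)) by (field; lra).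
    apply Rmult_lt_reg_l with t0; [lra|]; nra.
Qed.

Section Beta.

Variable bb : R.
Hypothesis hbb : 0 < bb.

Lemma beta_S_even k : Nat.even k = true ->
  beta1 t0 bb (S k) = (1 - tau t0 k) * beta1 t0 bb k /\
  beta2 t0 bb (S k) = beta2 t0 bb k.
Proof. intros E; unfold beta1, beta2; simpl; rewrite E; auto. Qed.

Lemma beta_S_odd k : Nat.even k = false ->
  beta1 t0 bb (S k) = beta1 t0 bb k /\
  beta2 t0 bb (S k) = (1 - tau t0 k) * beta2 t0 bb k.
Proof. intros E; unfold beta1, beta2; simpl; rewrite E; auto. Qed.

Lemma beta_pos k : 0 < beta1 t0 bb k /\ 0 < beta2 t0 bb k.
Proof.
  induction k as [|k [IH1 IH2]]; [unfold beta1, beta2; simpl; lra|].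
  pose proof (tau_lt_1 k).
  destruct (Nat.even k) eqn:E.
  - destruct (beta_S_even k E) as [-> ->]; split; nra.
  - destruct (beta_S_odd k E) as [-> ->]; split; nra.
Qed.

Lemma beta_prod_S k :
  beta1 t0 bb (S k) * beta2 t0 bb (S k)
  = (1 - tau t0 k) * (beta1 t0 bb k * beta2 t0 bb k).
Proof.
  destruct (Nat.even k) eqn:E.
  - destruct (beta_S_even k E) as [-> ->]; ring.
  - destruct (beta_S_odd k E) as [-> ->]; ring.
Qed.

Lemma beta_prod k :
  beta1 t0 bb (S k) * beta2 t0 bb (S k) = (1 - t0) * (bb * tau t0 k / t0) ^ 2.
Proof.
  induction k as [|k IH].
  - rewrite beta_prod_S; unfold beta1, beta2; simpl; field; lra.
  - rewrite beta_prod_S, IH.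
    replace ((bb * tau t0 (S k) / t0) ^ 2) with ((bb / t0) ^ 2 * tau t0 (S k) ^ 2)
      by (field; lra).
    rewrite tau_S_sq; field; lra.
Qed.

(* The factors [1 - tau_k] increase, so the alternating products stay in
   [[1 - tau_0, 1]]; the right bound at odd indices remembers the last factor. *)
Lemma beta_ratio_odd m :
  (1 - t0) * beta2 t0 bb (2 * m + 1) <= beta1 t0 bb (2 * m + 1)
  <= (1 - tau t0 (2 * m)) * beta2 t0 bb (2 * m + 1).
Proof.
  induction m as [|m [IHlo IHhi]].
  - unfold beta1, beta2; simpl; lra.
  - replace (2 * S m + 1)%nat with (S (S (2 * m + 1))) by lia.
    replace (2 * S m)%nat with (S (2 * m + 1)) by lia.
    destruct (beta_S_odd (2 * m + 1) (Nat.even_odd m)) as [Hb1 Hb2].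
    assert (Ev : Nat.even (S (2 * m + 1)) = true)
      by (replace (S (2 * m + 1)) with (2 * S m)%nat by lia; apply Nat.even_even).
    destruct (beta_S_even _ Ev) as [-> ->].
    rewrite Hb1, Hb2.
    destruct (beta_pos (2 * m + 1)) as [P1 P2].
    pose proof (tau_decr (2 * m)) as D1.
    pose proof (tau_decr (2 * m + 1)) as D2.
    replace (S (2 * m)) with (2 * m + 1)%nat in D1 by lia.
    pose proof (tau_lt_1 (2 * m + 1)). pose proof (tau_lt_1 (S (2 * m + 1))).
    split.
    + apply Rle_trans with ((1 - tau t0 (2 * m + 1)) * beta1 t0 bb (2 * m + 1)).
      * replace ((1 - t0) * ((1 - tau t0 (2 * m + 1)) * beta2 t0 bb (2 * m + 1)))
          with ((1 - tau t0 (2 * m + 1)) * ((1 - t0) * beta2 t0 bb (2 * m + 1)))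
          by ring.
        apply Rmult_le_compat_l; lra.
      * apply Rmult_le_compat_r; lra.
    + apply Rmult_le_compat_l; [lra|].
      apply Rle_trans with ((1 - tau t0 (2 * m)) * beta2 t0 bb (2 * m + 1)); [lra|].
      apply Rmult_le_compat_r; lra.
Qed.

Lemma beta_ratio k : (1 <= k)%nat ->
  (1 - t0) * beta2 t0 bb k <= beta1 t0 bb k <= beta2 t0 bb k.
Proof.
  intros Hk.
  destruct (Nat.Even_or_Odd k) as [[m ->] | [m ->]].
  - destruct m as [|m]; [lia|].
    replace (2 * S m)%nat with (S (2 * m + 1)) by lia.
    destruct (beta_S_odd (2 * m + 1) (Nat.even_odd m)) as [-> ->].
    destruct (beta_ratio_odd m) as [Hlo Hhi].
    pose proof (tau_decr (2 * m)) as D.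
    replace (S (2 * m)) with (2 * m + 1)%nat in D by lia.
    pose proof (tau_pos (2 * m + 1)); pose proof (tau_lt_1 (2 * m + 1)).
    destruct (beta_pos (2 * m + 1)).
    split.
    + apply Rle_trans with ((1 - t0) * beta2 t0 bb (2 * m + 1)); [|lra].
      apply Rmult_le_compat_l; [lra|].
      rewrite <- (Rmult_1_l (beta2 t0 bb (2 * m + 1))) at 2.
      apply Rmult_le_compat_r; lra.
    + apply Rle_trans with ((1 - tau t0 (2 * m)) * beta2 t0 bb (2 * m + 1));
        [lra | apply Rmult_le_compat_r; lra].
  - destruct (beta_ratio_odd m) as [Hlo Hhi].
    pose proof (tau_pos (2 * m)).
    destruct (beta_pos (2 * m + 1)).
    split; [lra | nra].
Qed.

Lemma beta_S_bounds k :
  let m := bb * (tau t0 k / t0) in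
  (1 - t0) * m <= beta1 t0 bb (S k) <= sqrt (1 - t0) * m /\
  sqrt (1 - t0) * m <= beta2 t0 bb (S k) <= m.
Proof.
  intros m.
  assert (Hs : sqrt (1 - t0) ^ 2 = 1 - t0) by (rewrite pow2_sqrt; lra).
  rewrite <- Hs at 1.
  apply sandwich_of_prod_ratio.
  - apply sqrt_lt_R0; lra.
  - apply Rmult_lt_0_compat; [lra | apply Rdiv_lt_0_compat; [apply tau_pos | lra]].
  - apply beta_pos.
  - rewrite Hs; apply beta_ratio; lia.
  - rewrite beta_prod, Hs; unfold m; field; lra.
Qed.

End Beta.

End Tau.

Theorem lemma7 (tau0 betabar : R) (htau : 0 < tau0 < 1) (hb : 0 < betabar) :
  forall k : nat, (1 <= k)%nat ->
    (1 - tau0) * betabar / (2 * tau0 * INR k + 1) < beta1 tau0 betabar k /\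
    beta1 tau0 betabar k < 2 * betabar * sqrt (1 - tau0) / (tau0 * INR k) /\
    betabar * sqrt (1 - tau0) / (2 * tau0 * INR k + 1) < beta2 tau0 betabar k /\
    beta2 tau0 betabar k < 2 * betabar / (tau0 * INR k).
Proof.
  intros k Hk. destruct k as [|n]; [lia|].
  destruct (beta_S_bounds tau0 htau betabar hb n) as [[B1lo B1hi] [B2lo B2hi]].
  destruct (tau_div_t0_bounds tau0 htau n) as [Rlo Rhi].
  pose proof (tau_pos tau0 htau n).
  pose proof (lt_0_INR (S n) (Nat.lt_0_succ n)).
  assert (Hs : 0 < sqrt (1 - tau0)) by (apply sqrt_lt_R0; lra).
  set (s := sqrt (1 - tau0)) in *.
  set (r := tau tau0 n / tau0) in *.
  set (D1 := 2 * tau0 * INR (S n) + 1) in *.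
  set (D2 := tau0 * INR (S n)) in *.
  assert (0 < D1) by (unfold D1; nra).
  assert (0 < D2) by (unfold D2; nra).
  assert (0 < (1 - tau0) * betabar) by nra.
  assert (0 < betabar * s) by nra.
  repeat split.
  - apply Rdiv_lt_of_lt_mul; [lra|].
    apply Rmult_le_compat_r with (r := D1) in B1lo; nra.
  - apply Rlt_div_of_mul_lt; [lra|].
    apply Rmult_le_compat_r with (r := D2) in B1hi; nra.
  - apply Rdiv_lt_of_lt_mul; [lra|].
    apply Rmult_le_compat_r with (r := D1) in B2lo; nra.
  - apply Rlt_div_of_mul_lt; [lra|].
    apply Rmult_le_compat_r with (r := D2) in B2hi; nra.
Qed.
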